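(* Let $m\ge2$, let $\mathbf A$ be the $(m-1)\times(m-1)$ tridiagonal matrix with $2$ on the diagonal and $-1$ on the sub- and super-diagonals, and let $\mathbf v=\mathbf A^{-1}\mathbf 1$. Then $v_j=\frac12 j(m-j)$ for $j=1,\dots,m-1$, and the eigenvalue problem $$ \Omega^2\xi_j+v_{j+1}\xi_{j+1}-2v_j\xi_j+v_{j-1}\xi_{j-1}=0,\quad j=1,\dots,m-1, $$ (with $v_0=v_m=0$), i.e. the eigenvalue problem for the matrix $\mathbf A\,\mathrm{diag}(\mathbf v)$, has exactly the $m-1$ simple eigenvalues $\Omega^2\in\{n(n+1)/2:\ n=1,\dots,m-1\}=\{1,3,6,\dots,m(m-1)/2\}$.
   Context: $\mathbf 1=(1,\dots,1)^T\in\mathbb R^{m-1}$. *)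

From HB Require Import structures.
From mathcomp Require Import all_boot all_order all_algebra.
Set Implicit Arguments. Unset Strict Implicit. Unset Printing Implicit Defensive.
Import Order.TTheory GRing.Theory Num.Theory.
Local Open Scope ring_scope.

Definition tridiagA (R : pzRingType) (n : nat) : 'M[R]_n :=
  \matrix_(i < n, j < n)
    (if i == j then 2%:R
     else if ((i : nat) == j.+1) || ((j : nat) == i.+1) then -1 else 0).

(* v = A^{-1} 1, a column vector; entry i (0-based) is v_{i+1}. *)
Definition vvec (R : fieldType) (n : nat) : 'cV[R]_n :=
  invmx (tridiagA R n) *m const_mx 1.

Definition Amat (R : fieldType) (n : nat) : 'M[R]_n :=
  tridiagA R n *m diag_mx (vvec R n)^T.

From HB Require Import structures.
From mathcomp Require Import all_boot all_order all_algebra ring.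
Set Implicit Arguments. Unset Strict Implicit. Unset Printing Implicit Defensive.
Import Order.TTheory GRing.Theory Num.Theory.
Local Open Scope ring_scope.

(* Write N = m - 1 and let A be the N x N matrix
   tridiag(-1, 2, -1).  For a row vector g = (g 1, ..., g N) padded with
   g 0 = g (N+1) = 0, the product g A is the negative second difference
   2 g j - g (j-1) - g (j+1).  On polynomial-like sequences this operator
   acts nicely on the falling factorials x^(b) = x (x-1) ... (x-b+1):
   it lowers the degree.  Put w x = x (m - x) / 2 and
   e_k x = (m - x) x^(k+1), k = 0..N-1; both vanish at x = 0 and x = m.
   A direct computation shows that w times the second difference of e_k
   is lambda_k e_k - c_k e_(k-1) with lambda_k = (k+1)(k+2)/2 and
   c_k = (m - k - 1) lambda_(k-1) (c_0 = 0).  Hence the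
   matrix P with rows (e_k 1, ..., e_k N) satisfies P (A diag w) = T P for a
   lower bidiagonal T with diagonal lambda_0, ..., lambda_(N-1), and P is
   invertible (its transpose is triangular with nonzero diagonal).  So
   A diag w and T have the same characteristic polynomial, which gives the
   eigenvalues and their simplicity; moreover det A != 0, and since the
   second difference of w is the constant 1, A w = 1, i.e. v = A^-1 1 = w. *)

Section FallingFactorial.
Variable R : comNzRingType.

Definition falling (b : nat) (x : R) : R := \prod_(i < b) (x - i%:R).

Definition ndiff2 (h : R -> R) (x : R) : R := 2%:R * h x - h (x - 1) - h (x + 1).

Lemma falling0 x : falling 0 x = 1.
Proof. by rewrite /falling big_ord0. Qed.

Lemma fallingS b x : falling b.+1 x = falling b x * (x - b%:R).
Proof. by rewrite /falling big_ord_recr. Qed.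

Lemma fallingSl b x : falling b.+1 x = x * falling b (x - 1).
Proof.
rewrite /falling big_ord_recl subr0; congr (_ * _).
by apply: eq_bigr => i _; rewrite lift0 -natr1 opprD addrA addrAC.
Qed.

Lemma falling_diff b x :
  falling b.+1 (x + 1) - falling b.+1 x = b.+1%:R * falling b x.
Proof. rewrite fallingSl addrK fallingS -natr1; ring. Qed.

Lemma falling_ndiff2 b x :
  ndiff2 (falling b.+1) x = - (b.+1%:R * (falling b x - falling b (x - 1))).
Proof.
have dx := falling_diff b x; have dx1 := falling_diff b (x - 1).
rewrite subrK in dx1.
have up : falling b.+1 (x + 1) = falling b.+1 x + b.+1%:R * falling b x.
  by rewrite -dx [RHS]addrC subrK.
have down : falling b.+1 (x - 1) = falling b.+1 x - b.+1%:R * falling b (x - 1).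
  by rewrite -dx1 opprB [RHS]addrC subrK.
rewrite /ndiff2 up down; ring.
Qed.

Lemma ndiff2_lin (a : R) (f g : R -> R) x :
  ndiff2 (fun y => a * f y - g y) x = a * ndiff2 f x - ndiff2 g x.
Proof. rewrite /ndiff2; ring. Qed.

Lemma ndiff2_nat (h : R -> R) (j : nat) :
  ndiff2 h j.+1%:R = 2%:R * h j.+1%:R - h j%:R - h j.+2%:R.
Proof.
have down : j.+1%:R - 1 = j%:R :> R by rewrite -natr1 addrK.
by rewrite /ndiff2 down natr1.
Qed.

Lemma falling_nat_lt b c : (c < b)%N -> falling b c%:R = 0.
Proof.
elim: b => [//|b IH]; rewrite ltnS leq_eqVlt fallingS => /orP [/eqP ->|/IH ->].
  by rewrite subrr mulr0.
by rewrite mul0r.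
Qed.

End FallingFactorial.

Lemma falling_nat_neq0 (R : numDomainType) b : falling b (b%:R : R) != 0.
Proof.
apply/prodf_neq0 => i _; rewrite -natrB 1?ltnW // pnatr_eq0 subn_eq0 -ltnNge.
exact: ltn_ord.
Qed.

Section Eigenfunctions.
Variables (R : fieldType) (m : R).

Definition weight (x : R) : R := x * (m - x) / 2%:R.

Definition eigval (k : nat) : R := ((k.+1 * k.+2)%N)%:R / 2%:R.

Definition eigfun (k : nat) (x : R) : R := (m - x) * falling k.+1 x.

Definition subcoef (k : nat) : R :=
  if k is k'.+1 then (m - k.+1%:R) * eigval k' else 0.

(* e_k expanded in falling factorials, to which ndiff2 applies termwise. *)
Lemma eigfun_falling k y :
  eigfun k y = (m - k.+1%:R) * falling k.+1 y - falling k.+2 y.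
Proof. rewrite /eigfun (fallingS k.+1); ring. Qed.

Lemma weight_ndiff2_falling k x :
  weight x * ndiff2 (falling k.+2) x = - eigval k * eigfun k x.
Proof.
rewrite falling_ndiff2.
have dx1 := falling_diff k (x - 1); rewrite subrK in dx1.
rewrite dx1 /eigfun (fallingSl k x) /weight /eigval natrM; ring.
Qed.

Lemma ndiff2_falling1 (x : R) : ndiff2 (falling 1) x = 0.
Proof. by rewrite falling_ndiff2 !falling0 subrr mulr0 oppr0. Qed.

Lemma weight_ndiff2_eigfun k x :
  weight x * ndiff2 (eigfun k) x = eigval k * eigfun k x - subcoef k * eigfun k.-1 x.
Proof.
have -> : ndiff2 (eigfun k) x =
    ndiff2 (fun y => (m - k.+1%:R) * falling k.+1 y - falling k.+2 y) x.
  by rewrite /ndiff2 !eigfun_falling.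
rewrite ndiff2_lin mulrBr mulrCA weight_ndiff2_falling.
case: k => [|k] /=.
  by rewrite ndiff2_falling1 !mulr0 mul0r subr0 sub0r mulNr opprK.
rewrite weight_ndiff2_falling; ring.
Qed.

Lemma ndiff2_weight (two_neq0 : 2%:R != 0 :> R) x : ndiff2 weight x = 1.
Proof. by rewrite /ndiff2 /weight; field. Qed.

End Eigenfunctions.

Section Tridiagonal.
Variable R : nzRingType.

Lemma tridiag_delta (a b : nat) :
  (if a == b then 2%:R else if (a == b.+1) || (b == a.+1) then -1 else 0 : R)
  = 2%:R * (a == b)%:R - (a == b.+1)%:R - (a.+1 == b)%:R.
Proof.
have [->|_] := eqVneq a b.
  by rewrite ?eqxx (ltn_eqF (ltnSn b)) (gtn_eqF (ltnSn b)) mulr1 !subr0.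
rewrite mulr0 sub0r.
have [->|_] := eqVneq a b.+1.
  by rewrite ?eqxx /= (gtn_eqF (ltnW (ltnSn b.+1))) subr0.
by case ba1: (b == a.+1); rewrite /= eq_sym ba1 ?oppr0 ?sub0r ?addr0.
Qed.

Lemma sum_delta N (c : nat) (F : nat -> R) :
  \sum_(i < N) F i * (i == c :> nat)%:R = if (c < N)%N then F c else 0.
Proof.
elim: N => [|N IH]; first by rewrite big_ord0.
rewrite big_ord_recr /= IH ltnS.
by case: ltngtP => [_|_|->]; rewrite ?mulr0 ?addr0 ?mulr1 ?add0r.
Qed.

Lemma sum_delta_succ N (c : nat) (F : nat -> R) :
  \sum_(i < N) F i * (i.+1 == c :> nat)%:R =
    if c is c'.+1 then (if (c' < N)%N then F c' else 0) else 0.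
Proof.
case: c => [|c]; first by rewrite big1 // => i _; rewrite mulr0.
exact: sum_delta.
Qed.

Lemma row_mul_tridiag N (g : nat -> R) (j : 'I_N) : g 0%N = 0 -> g N.+1 = 0 ->
  \sum_(i < N) g i.+1 * tridiagA R N i j = 2%:R * g j.+1 - g j - g j.+2.
Proof.
move=> g0 gN.
under eq_bigr => i _ do rewrite /tridiagA mxE -val_eqE /= tridiag_delta
  mulrBr mulrBr mulrA.
rewrite !sumrB (sum_delta N j (fun k => g k.+1 * 2%:R)).
rewrite (sum_delta N j.+1 (fun k => g k.+1)) (sum_delta_succ N j (fun k => g k.+1)).
rewrite ltn_ord mulr_natr mulr_natl [RHS]addrAC; congr (_ - _ - _).
  case: (ltnP j.+1 N) => // le_N_j1.
  by have -> : j.+1 = N by apply/eqP; rewrite eqn_leq le_N_j1 andbT.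
by case: j => [[|j]] //= lt_j1N; rewrite (ltnW lt_j1N).
Qed.

Lemma tridiag_tr N : (tridiagA R N)^T = tridiagA R N.
Proof.
apply/matrixP => i j; rewrite !mxE eq_sym.
by rewrite [((j : nat) == i.+1) || _]orbC.
Qed.

End Tridiagonal.

Lemma char_poly_similar (R : fieldType) n (P M T : 'M[R]_n) :
  \det P != 0 -> P *m M = T *m P -> char_poly M = char_poly T.
Proof.
move=> detP_neq0 PM_TP.
have polyPM : map_mx polyC P *m char_poly_mx M = char_poly_mx T *m map_mx polyC P.
  rewrite /char_poly_mx mulmxBr mulmxBl -!map_mxM PM_TP.
  by rewrite mul_mx_scalar mul_scalar_mx.
have := congr1 determinant polyPM; rewrite !det_mulmx det_map_mx mulrC.
by apply: mulIf; rewrite polyC_eq0.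
Qed.

Lemma eigenvalue_split (R : fieldType) n (A : 'M[R]_n) (c : 'I_n -> R) :
  char_poly A = \prod_(i < n) ('X - (c i)%:P) ->
  forall a, eigenvalue A a <-> exists i, a = c i.
Proof.
move=> charA a; rewrite eigenvalue_root_char charA rootE horner_prod.
split; last by case=> i ->; apply/prodf_eq0; exists i; rewrite ?hornerXsubC ?subrr.
by move/prodf_eq0 => [i _]; rewrite hornerXsubC subr_eq0 => /eqP ->; exists i.
Qed.

Section Similarity.
Variables (R : numFieldType) (N : nat).

(* The matrix size is N = m - 1, so m = N + 1. *)
Let m : R := N.+1%:R.

Definition wvec : 'cV[R]_N := \col_(i < N) weight m i.+1%:R.

Definition eigmx : 'M[R]_N := \matrix_(k, j) eigfun m k j.+1%:R.

Definition bidiag : 'M[R]_N :=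
  \matrix_(k, l) (eigval R k * (l == k :> nat)%:R - subcoef m k * (l.+1 == k)%:R).

Let M : 'M[R]_N := tridiagA R N *m diag_mx wvec^T.

Lemma eigmx_intertwine : eigmx *m M = bidiag *m eigmx.
Proof.
apply/matrixP => k j; rewrite /M mulmxA mul_mx_diag !mxE.
under eq_bigr do rewrite mxE.
rewrite (@row_mul_tridiag _ N (fun p => eigfun m k p%:R)); first last.
- by rewrite /eigfun /m subrr mul0r.
- by rewrite /eigfun falling_nat_lt // mulr0.
rewrite -ndiff2_nat mulrC weight_ndiff2_eigfun.
under eq_bigr do rewrite !mxE mulrBl mulrAC [X in _ - X]mulrAC.
rewrite sumrB (sum_delta N k (fun l => eigval R k * eigfun m l j.+1%:R)) ltn_ord.
rewrite (sum_delta_succ N k (fun l => subcoef m k * eigfun m l j.+1%:R)).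
by case: k => [[|k] /= lt_kN]; rewrite ?mul0r ?(ltnW lt_kN).
Qed.

Lemma bidiag_trig : is_trig_mx bidiag.
Proof.
apply/is_trig_mxP => k l lt_kl; rewrite mxE (gtn_eqF lt_kl) (gtn_eqF (leqW lt_kl)).
by rewrite !mulr0 subr0.
Qed.

Lemma bidiag_diag k : bidiag k k = eigval R k.
Proof. by rewrite mxE eqxx (gtn_eqF (ltnSn k)) mulr1 mulr0 subr0. Qed.

Lemma eigval_neq0 k : eigval R k != 0.
Proof. by rewrite /eigval mulf_neq0 ?invr_eq0 ?pnatr_eq0 // muln_eq0. Qed.

Lemma det_bidiag_neq0 : \det bidiag != 0.
Proof.
rewrite det_trig ?bidiag_trig //; apply/prodf_neq0 => k _.
by rewrite bidiag_diag eigval_neq0.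
Qed.

(* P^T is triangular, since e_k vanishes at 1, ..., k, with nonzero
   diagonal, since e_k (k+1) != 0 for k + 1 < m. *)
Lemma det_eigmx_neq0 : \det eigmx != 0.
Proof.
rewrite -det_tr det_trig.
  apply/prodf_neq0 => k _; rewrite !mxE /eigfun mulf_neq0 ?falling_nat_neq0 //.
  by rewrite /m -natrB ?pnatr_eq0 ?subn_eq0 -?ltnNge ?ltnS ?ltn_ord // ltnW.
by apply/is_trig_mxP => j k lt_jk; rewrite !mxE /eigfun falling_nat_lt ?mulr0.
Qed.

Lemma char_poly_M : char_poly M = \prod_(k < N) ('X - (eigval R k)%:P).
Proof.
rewrite (char_poly_similar det_eigmx_neq0 eigmx_intertwine).
rewrite char_poly_trig ?bidiag_trig //.
by apply: eq_bigr => k _; rewrite bidiag_diag.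
Qed.

(* det A != 0, because det (A diag w) = det T != 0. *)
Lemma tridiag_unit : tridiagA R N \in unitmx.
Proof.
have detM : \det M = \det bidiag.
  apply: (mulIf det_eigmx_neq0).
  by rewrite mulrC -det_mulmx eigmx_intertwine det_mulmx.
rewrite unitmxE unitfE; apply: contra det_bidiag_neq0 => /eqP detA0.
by rewrite -detM det_mulmx detA0 mul0r.
Qed.

(* A w = 1, as A is symmetric and w has second difference 1. *)
Lemma tridiag_wvec : tridiagA R N *m wvec = const_mx 1.
Proof.
apply: trmx_inj; rewrite trmx_mul tridiag_tr trmx_const.
apply/matrixP => z j; rewrite [LHS]mxE [RHS]mxE (ord1 z).
under eq_bigr do rewrite [X in X * _]mxE [X in X * _]mxE.
rewrite (@row_mul_tridiag _ N (fun p => weight m p%:R)); first last.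
- by rewrite /weight /m subrr mulr0 mul0r.
- by rewrite /weight !mul0r.
by rewrite -ndiff2_nat ndiff2_weight // pnatr_eq0.
Qed.

Lemma vvec_wvec : vvec R N = wvec.
Proof. by rewrite /vvec -tridiag_wvec mulKmx // tridiag_unit. Qed.

Lemma char_poly_Amat : char_poly (Amat R N) = \prod_(k < N) ('X - (eigval R k)%:P).
Proof. by rewrite /Amat vvec_wvec char_poly_M. Qed.

End Similarity.

Theorem mainTheorem7 (R : realFieldType) (m : nat) (hm : (2 <= m)%N) :
  (* v_j = j (m - j) / 2 for j = 1..m-1 (index i : 'I_(m-1) stands for j = i+1) *)
  (forall i : 'I_(m - 1),
      vvec R (m - 1) i 0 = ((i.+1 * (m - i.+1))%N)%:R / 2%:R) /\
  (* the eigenvalues of A diag(v) are exactly n(n+1)/2, n = 1..m-1 *)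
  (forall a : R, eigenvalue (Amat R (m - 1)) a <->
      exists n : 'I_(m - 1), a = ((n.+1 * n.+2)%N)%:R / 2%:R) /\
  (* and they are all simple: the characteristic polynomial is the product
     of the m-1 distinct linear factors *)
  char_poly (Amat R (m - 1)) =
    \prod_(n < m - 1) ('X - (((n.+1 * n.+2)%N)%:R / 2%:R)%:P).
Proof.
case: m hm => [|N] // _; rewrite subn1 /=.
split.
  move=> i; rewrite vvec_wvec mxE /weight natrM natrB //.
  by rewrite ltnW // ltnS ltn_ord.
split; last exact: char_poly_Amat.
exact: eigenvalue_split (char_poly_Amat R N).
Qed.
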